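(* For any $i,j\in[n]$ the real line bundles $E_{2,i}(L)$ and $E_{2,j}(L)$ over $M_2(L)$ are isomorphic.
   Context: Let $n\ge 4$, $[n]=\{1,\dots,n\}$, and $L=(l_1,\dots,l_n)$ with all $l_i>0$, generic in the sense that $\sum_{i\in I}\pm l_i\neq 0$ for every nonempty $I\subseteq[n]$ and every choice of signs. Let $\widetilde M_2(L)=\{(u_1,\dots,u_n)\in(S^1)^n:\sum_i l_iu_i=0\}$ and $M_2(L)=\widetilde M_2(L)/O(2)$, a smooth closed manifold of dimension $n-3$. The tautological line bundle $E_{2,i}(L)$ is the real line bundle over $M_2(L)$ obtained as the quotient by $O(2)$ of the bundle over $\widetilde M_2(L)$ whose fiber at $(u_1,\dots,u_n)$ is the tangent line $T_{u_i}S^1$. *)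

From mathcomp Require Import all_boot all_order all_algebra.
From mathcomp Require Import boolp classical_sets reals.
Set Implicit Arguments. Unset Strict Implicit. Unset Printing Implicit Defensive.
Import Order.TTheory GRing.Theory Num.Theory.
Local Open Scope ring_scope.
Local Open Scope classical_set_scope.

(* An element of O(2): [[c, -e s], [s, e c]] with c^2 + s^2 = 1 and
   e = -1 if o2refl is true (reflection), e = 1 otherwise (rotation). *)
Record O2 (R : realType) := MkO2 {
  o2c : R; o2s : R; o2refl : bool;
  o2_unit : o2c ^+ 2 + o2s ^+ 2 = 1 }.

Definition o2act (R : realType) (g : O2 R) (x : R * R) : R * R :=
  let e : R := if o2refl g then -1 else 1 in
  (o2c g * x.1 - e * o2s g * x.2, o2s g * x.1 + e * o2c g * x.2).

Definition config (R : realType) (n : nat) := 'I_n -> R * R.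

Definition Mtilde (R : realType) (n : nat) (l : 'I_n -> R) : set (config R n) :=
  [set u | (forall k, (u k).1 ^+ 2 + (u k).2 ^+ 2 = 1) /\
           \sum_k l k * (u k).1 = 0 /\ \sum_k l k * (u k).2 = 0].

(* total space of the bundle over \tilde M_2(L) with fiber T_{u_i} S^1
   (the line in R^2 orthogonal to u_i) *)
Definition Etilde (R : realType) (n : nat) (l : 'I_n -> R) (i : 'I_n)
  : set (config R n * (R * R)) :=
  [set x | Mtilde l x.1 /\ (x.1 i).1 * x.2.1 + (x.1 i).2 * x.2.2 = 0].

Definition act_cfg (R : realType) (n : nat) (g : O2 R) (u : config R n)
  : config R n := fun k => o2act g (u k).
Definition act_tot (R : realType) (n : nat) (g : O2 R) (x : config R n * (R * R))
  : config R n * (R * R) := (act_cfg g x.1, o2act g x.2).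

Definition orbit_cfg (R : realType) (n : nat) (u : config R n) : set (config R n) :=
  range (fun g : O2 R => act_cfg g u).
Definition orbit_tot (R : realType) (n : nat) (x : config R n * (R * R))
  : set (config R n * (R * R)) :=
  range (fun g : O2 R => act_tot g x).

(* M_2(L) = \tilde M_2(L) / O(2), points are O(2)-orbits *)
Definition M2 (R : realType) (n : nat) (l : 'I_n -> R) : set (set (config R n)) :=
  (@orbit_cfg R n) @` Mtilde l.

Definition E2 (R : realType) (n : nat) (l : 'I_n -> R) (i : 'I_n)
  : set (set (config R n * (R * R))) :=
  (@orbit_tot R n) @` Etilde l i.

Definition bproj (R : realType) (n : nat) (C : set (config R n * (R * R)))
  : set (config R n) := [set u | exists v, C (u, v)].

(* metrics inducing the standard topologies on (R^2)^n and (R^2)^n x R^2 *)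
Definition dist_cfg (R : realType) (n : nat) (u u' : config R n) : R :=
  \sum_k (`|(u k).1 - (u' k).1| + `|(u k).2 - (u' k).2|).
Definition dist_tot (R : realType) (n : nat) (x y : config R n * (R * R)) : R :=
  dist_cfg x.1 y.1 + `|x.2.1 - y.2.1| + `|x.2.2 - y.2.2|.

Definition rel_open (R : realType) (T : Type) (d : T -> T -> R) (S U : set T) :=
  forall x, S x -> U x -> exists2 e : R, 0 < e & forall y, S y -> d x y < e -> U y.

(* quotient topology on orb @` S: a family F of orbits is open iff its
   preimage in S is open in S *)
Definition quot_open (R : realType) (T : Type) (d : T -> T -> R) (S : set T)
  (orb : T -> set T) (F : set (set T)) :=
  rel_open d S [set x | S x /\ F (orb x)].

Definition quot_cont (R : realType) (T : Type) (d : T -> T -> R)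
  (S1 S2 : set T) (orb : T -> set T) (f : set T -> set T) :=
  forall F, quot_open d S2 orb F -> quot_open d S1 orb [set C | F (f C)].

Definition vadd (R : realType) (a : R) (v w : R * R) : R * R :=
  (a * v.1 + w.1, a * v.2 + w.2).

(* Phi : E_{2,i}(L) -> E_{2,j}(L) is an isomorphism of real line bundles
   over M_2(L), with inverse Psi: a homeomorphism of total spaces commuting
   with the projections and linear on each fiber (the linear structure on
   the fiber over [u] being the one transported from T_{u_i}S^1 via
   v |-> [u, v]). *)
Definition line_bundle_iso (R : realType) (n : nat) (l : 'I_n -> R) (i j : 'I_n)
  (Phi Psi : set (config R n * (R * R)) -> set (config R n * (R * R))) :=
  (forall C, E2 l i C -> E2 l j (Phi C)) /\
      (forall C, E2 l j C -> E2 l i (Psi C)) /\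
      (forall C, E2 l i C -> Psi (Phi C) = C) /\
      (forall C, E2 l j C -> Phi (Psi C) = C) /\
      (forall C, E2 l i C -> bproj (Phi C) = bproj C) /\
      (forall u (a : R) v w v' w',
         Etilde l i (u, v) -> Etilde l i (u, w) ->
         Etilde l j (u, v') -> Etilde l j (u, w') ->
         Phi (orbit_tot (u, v)) = orbit_tot (u, v') ->
         Phi (orbit_tot (u, w)) = orbit_tot (u, w') ->
         Phi (orbit_tot (u, vadd a v w)) = orbit_tot (u, vadd a v' w')) /\
      quot_cont (@dist_tot R n) (Etilde l i) (Etilde l j) (@orbit_tot R n) Phi /\
      quot_cont (@dist_tot R n) (Etilde l j) (Etilde l i) (@orbit_tot R n) Psi.

From mathcomp Require Import all_boot all_order all_algebra.
From mathcomp Require Import boolp classical_sets reals.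
From mathcomp Require Import ring lra.
Set Implicit Arguments. Unset Strict Implicit. Unset Printing Implicit Defensive.
Import Order.TTheory GRing.Theory Num.Theory.
Local Open Scope ring_scope.
Local Open Scope classical_set_scope.

(* Write J for the rotation by a right angle. Over u in \tilde M_2(L) the
   fibre T_{u_i}S^1 is the line spanned by J u_i, and v |-> cross(u_i, v) J u_j
   maps it isomorphically onto T_{u_j}S^1, with inverse given by the same
   recipe with i and j exchanged. An element of O(2) multiplies both
   cross(u_i, v) and J u_j by its determinant, so this polynomial map is
   O(2)-equivariant and descends to a homeomorphism of the quotient total
   spaces over the identity of M_2(L). Linearity on the fibres of the quotient
   requires the action of O(2) on \tilde M_2(L) to be free: a rotation fixing
   a unit vector is the identity, and a reflection fixing every u_k forces the
   u_k onto one line, so u_k = +-u_i and sum_k +-l_k = 0, against genericity. *)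

Section Plane.
Variable R : realType.
Implicit Types (a b v w : R * R) (c : R) (g : O2 R).

Definition unit_vec a := a.1 ^+ 2 + a.2 ^+ 2 = 1.
Definition cross a b : R := a.1 * b.2 - a.2 * b.1.
Definition dot a b : R := a.1 * b.1 + a.2 * b.2.
Definition perp a : R * R := (- a.2, a.1).
Definition scalev c a : R * R := (c * a.1, c * a.2).
Definition o2sign g : R := if o2refl g then -1 else 1.

Lemma cross_o2act g a b : cross (o2act g a) (o2act g b) = o2sign g * cross a b.
Proof.
case: g => c s r cs1; rewrite /cross /o2act /o2sign /=.
transitivity ((c ^+ 2 + s ^+ 2) * ((if r then -1 else 1) * (a.1 * b.2 - a.2 * b.1))).
  by case: r {cs1}; ring.
by rewrite cs1 mul1r.
Qed.

Lemma cross_fixed_refl g a b :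
  o2refl g -> o2act g a = a -> o2act g b = b -> cross a b = 0.
Proof.
by move=> rg ga gb; have := cross_o2act g a b; rewrite ga gb /o2sign rg; lra.
Qed.

(* For a rotation, c = dot a (g a) and s = cross a (g a) when a is a unit vector. *)
Lemma rot_fixed_unit g a :
  ~~ o2refl g -> unit_vec a -> o2act g a = a -> forall w, o2act g w = w.
Proof.
case: g => c s [] // ? _; rewrite /unit_vec => ua ga w.
have /= ga1 := congr1 fst ga; have /= ga2 := congr1 snd ga; rewrite /o2act /=.
have c1 : c = 1.
  have : c * (a.1 ^+ 2 + a.2 ^+ 2) = a.1 * (c * a.1 - 1 * s * a.2)
                                     + a.2 * (s * a.1 + 1 * c * a.2) by ring.
  by rewrite ua ga1 ga2 mulr1 -!expr2 ua.
have s0 : s = 0.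
  have : s * (a.1 ^+ 2 + a.2 ^+ 2) = a.1 * (s * a.1 + 1 * c * a.2)
                                     - a.2 * (c * a.1 - 1 * s * a.2) by rewrite c1; ring.
  by rewrite ua ga1 ga2 mulr1 mulrC subrr.
by case: w => w1 w2; rewrite c1 s0 /=; congr pair; ring.
Qed.

Lemma unit_frame a w : unit_vec a ->
  w = (dot a w * a.1 - cross a w * a.2, dot a w * a.2 + cross a w * a.1).
Proof.
rewrite /unit_vec => ua; case: w => w1 w2; rewrite /dot /cross /=.
congr pair; [rewrite -[w1]mulr1 -{1}ua | rewrite -[w2]mulr1 -{1}ua]; ring.
Qed.

Lemma cross0_scalev a w : unit_vec a -> cross a w = 0 -> w = scalev (dot a w) a.
Proof. by move=> ua aw; rewrite {1}(unit_frame w ua) aw /scalev; congr pair; ring. Qed.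

Lemma unit_vec_scalev c a : unit_vec a -> unit_vec (scalev c a) -> c ^+ 2 = 1.
Proof.
by move=> ua; rewrite /unit_vec /scalev /= !exprMn -mulrDr ua mulr1.
Qed.

Lemma tangent_scalev_perp a v :
  unit_vec a -> dot a v = 0 -> v = scalev (cross a v) (perp a).
Proof.
by move=> ua av; rewrite {1}(unit_frame v ua) av /scalev /perp /=; congr pair; ring.
Qed.

Lemma cross_scalev_perp a c : unit_vec a -> cross a (scalev c (perp a)) = c.
Proof.
rewrite /unit_vec /cross /scalev /perp /= => ua.
by transitivity (c * (a.1 ^+ 2 + a.2 ^+ 2)); [ring | rewrite ua mulr1].
Qed.

Definition norm1 a : R := `|a.1| + `|a.2|.
Definition dist1 a b : R := `|a.1 - b.1| + `|a.2 - b.2|.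

Lemma norm1_unit a : unit_vec a -> norm1 a <= 2.
Proof.
rewrite /unit_vec /norm1 => ua.
suff coord_le1 (x y : R) : x ^+ 2 + y ^+ 2 = 1 -> `|x| <= 1.
  by have := coord_le1 _ _ ua; have := coord_le1 a.2 a.1; rewrite addrC => /(_ ua); lra.
move=> xy1; rewrite -(ler_pXn2r (_ : 0 < 2)%N) ?nnegrE ?normr_ge0 //.
rewrite expr1n real_normK ?num_real //.
by have := sqr_ge0 y; lra.
Qed.

Lemma dist1_ge0 a b : 0 <= dist1 a b.
Proof. by rewrite addr_ge0. Qed.

Lemma norm1_ge0 a : 0 <= norm1 a.
Proof. by rewrite addr_ge0. Qed.

Lemma norm1_perp a : norm1 (perp a) = norm1 a.
Proof. by rewrite /norm1 normrN addrC. Qed.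

Lemma dist1_perp a b : dist1 (perp a) (perp b) = dist1 a b.
Proof. by rewrite /dist1 /= -opprD normrN addrC. Qed.

Lemma norm1_le_dist1 a b : norm1 b <= norm1 a + dist1 a b.
Proof.
rewrite /norm1 /dist1.
have := ler_normD a.1 (b.1 - a.1); have := ler_normD a.2 (b.2 - a.2).
by rewrite !subrKC (distrC b.1) (distrC b.2); lra.
Qed.

Lemma normr_cross_le a b : `|cross a b| <= norm1 a * norm1 b.
Proof.
rewrite /cross /norm1 mulrDr !mulrDl -!normrM.
have := ler_normB (a.1 * b.2) (a.2 * b.1).
by have := normr_ge0 (a.1 * b.1); have := normr_ge0 (a.2 * b.2); lra.
Qed.

Lemma cross_dist1_le a b a' b' :
  `|cross a b - cross a' b'| <= norm1 a * dist1 b b' + dist1 a a' * norm1 b'.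
Proof.
have -> : cross a b - cross a' b' =
    cross a (b.1 - b'.1, b.2 - b'.2) + cross (a.1 - a'.1, a.2 - a'.2) b'.
  by rewrite /cross /=; ring.
by apply: (le_trans (ler_normD _ _)); apply: lerD; apply: normr_cross_le.
Qed.

Lemma scalev_dist1_le c c' a a' :
  dist1 (scalev c a) (scalev c' a') <= `|c| * dist1 a a' + `|c - c'| * norm1 a'.
Proof.
rewrite /dist1 /norm1 /scalev /= !mulrDr.
have split_prod x x' : c * x - c' * x' = c * (x - x') + (c - c') * x' by ring.
rewrite !split_prod -!normrM.
by have := ler_normD (c * (a.1 - a'.1)) ((c - c') * a'.1);
   have := ler_normD (c * (a.2 - a'.2)) ((c - c') * a'.2); lra.
Qed.

End Plane.

Section Configurations.
Variables (R : realType) (n : nat).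
Implicit Types (l : 'I_n -> R) (u : config R n) (x y : config R n * (R * R)) (g : O2 R).

Definition generic l := forall (I : {set 'I_n}) (s : 'I_n -> bool), (0 < #|I|)%N ->
  \sum_(k in I) (if s k then l k else - l k) != 0.

Lemma Mtilde_not_collinear l u (i : 'I_n) :
  generic l -> Mtilde l u -> ~ (forall k, cross (u i) (u k) = 0).
Proof.
move=> gen [unit_u [sum1 sum2]] coll.
pose p k := dot (u i) (u k).
have u_p k : u k = scalev (p k) (u i) := cross0_scalev (unit_u i) (coll k).
have p_sign k : p k = 1 \/ p k = -1.
  have := unit_u k; rewrite u_p => /(unit_vec_scalev (unit_u i)) /eqP.
  by rewrite sqrf_eq1 => /orP [] /eqP; [left | right].
pose S := \sum_k l k * p k.
have S_coord (f : R * R -> R) : (forall c a, f (scalev c a) = c * f a) ->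
    \sum_k l k * f (u k) = S * f (u i).
  by move=> f_lin; rewrite /S mulr_suml; apply: eq_bigr => k _; rewrite u_p f_lin mulrA.
have S0 : S = 0.
  rewrite (S_coord fst) // in sum1; rewrite (S_coord snd) // in sum2.
  have := unit_u i; rewrite /unit_vec => ui1.
  by rewrite -[S]mulr1 -ui1 mulrDr !expr2 !mulrA sum1 sum2 !mul0r addr0.
have n_gt0 : (0 < n)%N := leq_ltn_trans (leq0n i) (ltn_ord i).
move: (gen [set: 'I_n]%SET (fun k => p k == 1)).
rewrite cardsT card_ord => /(_ n_gt0) /eqP; apply; transitivity S => //.
under eq_bigl do rewrite finset.in_setT.
apply: eq_bigr => k _; case: (p_sign k) => ->; rewrite ?eqxx ?mulr1 ?mulrN1 //.
by case: ifP => // /eqP; lra.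
Qed.

Lemma stabilizer_trivial l u (i : 'I_n) g :
  generic l -> Mtilde l u -> act_cfg g u = u -> forall w, o2act g w = w.
Proof.
move=> gen uM gu; have gk k : o2act g (u k) = u k by rewrite -[in RHS]gu.
case/boolP: (o2refl g) => [rg | nrg]; last exact: rot_fixed_unit nrg (uM.1 i) (gk i).
case: (Mtilde_not_collinear (i := i) gen uM) => k.
exact: cross_fixed_refl rg (gk i) (gk k).
Qed.

Lemma o2id_unit : (1 : R) ^+ 2 + 0 ^+ 2 = 1.
Proof. by rewrite expr1n expr0n addr0. Qed.

Definition o2id : O2 R := MkO2 false o2id_unit.

Lemma act_tot_id x : act_tot o2id x = x.
Proof.
have id_w w : o2act o2id w = w by case: w => a b; rewrite /o2act /=; congr pair; ring.
case: x => u v; rewrite /act_tot /act_cfg /= id_w; congr pair.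
by apply: funext => k; rewrite id_w.
Qed.

Lemma orbit_tot_refl x : orbit_tot x x.
Proof. by exists o2id => //; rewrite act_tot_id. Qed.

Lemma orbit_tot_fiber_inj l u (i : 'I_n) w w' :
  generic l -> Mtilde l u -> orbit_tot (u, w) = orbit_tot (u, w') -> w = w'.
Proof.
move=> gen uM e; have [] : orbit_tot (u, w) (u, w') by rewrite e; exact: orbit_tot_refl.
by move=> g _ [gu <-]; rewrite (stabilizer_trivial i gen uM gu).
Qed.

Lemma bproj_orbit_tot x : bproj (orbit_tot x) = orbit_cfg x.1.
Proof.
apply/seteqP; split => u /=.
  by case=> v [g _ [gu _]]; exists g.
by case=> g _ gu; exists (o2act g x.2), g; rewrite // /act_tot gu.
Qed.

Lemma dist_totE x y : dist_tot x y = dist_cfg x.1 y.1 + dist1 x.2 y.2.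
Proof. by rewrite /dist_tot addrA. Qed.

Lemma dist1_le_dist_cfg u u' k : dist1 (u k) (u' k) <= dist_cfg u u'.
Proof.
rewrite /dist_cfg (bigD1 k) //= lerDl.
by apply: sumr_ge0 => m _; apply: dist1_ge0.
Qed.

End Configurations.

Section Transfer.
Variables (R : realType) (n : nat).
Implicit Types (l : 'I_n -> R) (u : config R n) (x y : config R n * (R * R)) (g : O2 R).

Definition transfer (i j : 'I_n) u (v : R * R) : R * R :=
  scalev (cross (u i) v) (perp (u j)).
Definition transfer_tot i j x := (x.1, transfer i j x.1 x.2).
Definition transfer_orbits i j (C : set (config R n * (R * R))) := transfer_tot i j @` C.

Lemma transfer_tot_act i j g x :
  transfer_tot i j (act_tot g x) = act_tot g (transfer_tot i j x).
Proof.
case: x => u v; rewrite /transfer_tot /act_tot /=; congr pair.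
rewrite /transfer /act_cfg cross_o2act.
by case: g => c s [] ?; rewrite /o2act /o2sign /scalev /perp /=; congr pair; ring.
Qed.

Lemma transfer_orbits_orbit i j x :
  transfer_orbits i j (orbit_tot x) = orbit_tot (transfer_tot i j x).
Proof.
apply/seteqP; split => z /=.
  by case=> y [g _ <-] <-; exists g; rewrite // transfer_tot_act.
by case=> g _ <-; exists (act_tot g x); [exists g | rewrite transfer_tot_act].
Qed.

Lemma transfer_Etilde l i j x : Etilde l i x -> Etilde l j (transfer_tot i j x).
Proof. by case: x => u v [uM _]; split => //=; rewrite /transfer /scalev /perp /=; ring. Qed.

Lemma transfer_totK l i j x : Etilde l i x -> transfer_tot j i (transfer_tot i j x) = x.
Proof.
case: x => u v [[unit_u _] tangent]; rewrite /transfer_tot /transfer /=; congr pair.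
by rewrite cross_scalev_perp //; apply/esym/tangent_scalev_perp.
Qed.

Lemma transfer_vadd i j u (a : R) v w :
  transfer i j u (vadd a v w) = vadd a (transfer i j u v) (transfer i j u w).
Proof. by rewrite /transfer /vadd /scalev /cross /=; congr pair; ring. Qed.

Lemma transfer_tot_dist_le i j x y :
  unit_vec (x.1 i) -> unit_vec (y.1 j) -> dist_tot x y <= 1 ->
  dist_tot (transfer_tot i j x) (transfer_tot i j y) <= (4 * norm1 x.2 + 7) * dist_tot x y.
Proof.
case: x y => u v [u' v'] ui u'j; rewrite !dist_totE /=.
have cfg_le k : dist1 (u k) (u' k) <= dist_cfg u u' := dist1_le_dist_cfg u u' k.
set D := dist_cfg u u' + dist1 v v' => D1.
have DE : D = dist_cfg u u' + dist1 v v' by [].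
have D_ge k : dist1 (u k) (u' k) <= D /\ dist_cfg u u' <= D /\ dist1 v v' <= D.
  by have := cfg_le k; have := dist1_ge0 (u k) (u' k); have := dist1_ge0 v v'; lra.
have [dui [dcfg dv]] := D_ge i; have [duj _] := D_ge j.
have v'_le : norm1 v' <= norm1 v + 1 by have := norm1_le_dist1 v v'; lra.
set c := cross (u i) v; set c' := cross (u' i) v'.
have c_le : `|c| <= 2 * norm1 v.
  apply: le_trans (normr_cross_le _ _) _.
  exact: ler_pM (norm1_ge0 _) (norm1_ge0 _) (norm1_unit ui) (lexx _).
have dc_le : `|c - c'| <= 2 * D + D * (norm1 v + 1).
  apply: le_trans (cross_dist1_le _ _ _ _) _; apply: lerD.
    exact: ler_pM (norm1_ge0 _) (dist1_ge0 _ _) (norm1_unit ui) dv.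
  exact: ler_pM (dist1_ge0 _ _) (norm1_ge0 _) dui v'_le.
have := scalev_dist1_le c c' (perp (u j)) (perp (u' j)).
rewrite dist1_perp norm1_perp => dT.
have t1 : `|c| * dist1 (u j) (u' j) <= 2 * norm1 v * D :=
  ler_pM (normr_ge0 _) (dist1_ge0 _ _) c_le duj.
have t2 : `|c - c'| * norm1 (u' j) <= (2 * D + D * (norm1 v + 1)) * 2 :=
  ler_pM (normr_ge0 _) (norm1_ge0 _) dc_le (norm1_unit u'j).
rewrite /transfer; lra.
Qed.

Lemma transfer_tot_continuous i j x (e : R) : unit_vec (x.1 i) -> 0 < e ->
  exists2 d : R, 0 < d & forall y, unit_vec (y.1 j) -> dist_tot x y < d ->
    dist_tot (transfer_tot i j x) (transfer_tot i j y) < e.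
Proof.
move=> ui e_gt0; set K := 4 * norm1 x.2 + 7.
have K_gt0 : 0 < K by rewrite /K; have := norm1_ge0 x.2; lra.
exists (Num.min 1 (e / K)) => [|y u'j]; first by rewrite lt_min ltr01 divr_gt0.
rewrite lt_min => /andP [xy1 xyK].
apply: le_lt_trans (transfer_tot_dist_le ui u'j (ltW xy1)) _.
by rewrite mulrC -ltr_pdivlMr.
Qed.

Lemma transfer_orbits_continuous l i j :
  quot_cont (@dist_tot R n) (Etilde l i) (Etilde l j) (@orbit_tot R n) (transfer_orbits i j).
Proof.
move=> F F_open x xE [_ /=]; rewrite transfer_orbits_orbit => Fx.
have Tx := transfer_Etilde j xE.
have [e e_gt0 e_ball] := F_open _ Tx (conj Tx Fx).
have [d d_gt0 d_ball] := transfer_tot_continuous j (xE.1.1 i) e_gt0.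
exists d => // y yE xy; split => //=; rewrite transfer_orbits_orbit.
by have [] := e_ball _ (transfer_Etilde j yE) (d_ball y (yE.1.1 j) xy).
Qed.

End Transfer.

Theorem mainTheorem2 (R : realType) (n : nat) (l : 'I_n -> R) :
  (4 <= n)%N ->
  (forall k, 0 < l k) ->
  (forall (I : {set 'I_n}) (s : 'I_n -> bool), (0 < #|I|)%N ->
     \sum_(k in I) (if s k then l k else - l k) != 0) ->
  forall i j : 'I_n, exists Phi Psi, line_bundle_iso l i j Phi Psi.
Proof.
move=> _ _ gen i j; exists (transfer_orbits i j), (transfer_orbits j i).
split; [|split; [|split; [|split; [|split; [|split; [|split]]]]]].
- move=> _ [x xE <-]; rewrite transfer_orbits_orbit.
  by exists (transfer_tot i j x) => //; apply: transfer_Etilde.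
- move=> _ [x xE <-]; rewrite transfer_orbits_orbit.
  by exists (transfer_tot j i x) => //; apply: transfer_Etilde.
- by move=> _ [x xE <-]; rewrite !transfer_orbits_orbit (transfer_totK j xE).
- by move=> _ [x xE <-]; rewrite !transfer_orbits_orbit (transfer_totK i xE).
- by move=> _ [x _ <-]; rewrite transfer_orbits_orbit !bproj_orbit_tot.
- move=> u a v w v' w' vE _ _ _; rewrite !transfer_orbits_orbit.
  move=> /(orbit_tot_fiber_inj i gen vE.1) <- /(orbit_tot_fiber_inj i gen vE.1) <-.
  by rewrite /transfer_tot /= transfer_vadd.
- exact: transfer_orbits_continuous.
- exact: transfer_orbits_continuous.
Qed.
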